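(* Let $p\ge5$ be prime and $m\ge2$ an integer. Then the polynomial $$f_p=1+\sum_{k=0}^{(p-1)/2}(-1)^k\frac{p}{p-k}\binom{p-k}{k}m^kZ^{p-2k}\in\mathbb{Z}[Z]$$ is irreducible in $\mathbb{Q}[Z]$.
   Context: This polynomial equals $\sqrt m^{\,p}F_p(Z/\sqrt m)+1$ where $F_p(Z)=2T_p(Z/2)$ with $T_p$ the Chebyshev polynomial of the first kind; it is the De Moivre polynomial $f_p(Z,d,R)$ with $d=-1/(2m^{(p-1)/2})$, $R=(1-4m^p)/(4m^{p-1})$ (so $D=d^2-R=m$). *)

From mathcomp Require Import all_boot all_order all_algebra.
Set Implicit Arguments. Unset Strict Implicit. Unset Printing Implicit Defensive.
From mathcomp Require Import rat.
Import GRing.Theory Num.Theory.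
Local Open Scope ring_scope.

Definition f_poly (p m : nat) : {poly rat} :=
  1 + \sum_(0 <= k < ((p.-1)./2).+1)
        ((-1) ^+ k * (p%:R / (p - k)%:R) * ('C(p - k, k))%:R * (m%:R) ^+ k)%:P
          * 'X ^+ (p - 2 * k).

From mathcomp Require Import all_boot all_order all_algebra all_field.
From mathcomp Require Import ring zify.
Set Implicit Arguments. Unset Strict Implicit. Unset Printing Implicit Defensive.
Import Order.TTheory GRing.Theory Num.Theory.
Local Open Scope ring_scope.

(* f_p = 1 + D_p(Z, m), where D_n(X, mu) is the Dickson polynomial, which
   satisfies D_n(x + mu/x) = x^n + (mu/x)^n.  Hence, for x != 0,
       x^p f_p(x + m/x) = (x^p - s)(x^p - conj s),
   where s, conj s are the non-real roots of Y^2 + Y + m^p.  Let q be a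
   rational factor of f_p with 1 <= deg q < p, and G = X^(deg q) q(X + m/X),
   a real polynomial of degree at most 2 deg q.  The gcd g of G and X^p - s
   has coefficients in Q(s); it is not constant (lifting a root of q gives
   a common root), and it is not X^p - s (otherwise X^p - conj s would also
   divide G, forcing deg G >= 2p).  So g is a proper factor of X^p - s, and
   the product of its roots produces a p-th root b of s lying in Q(s).
   Writing b = a + c s one finds b conj b = m, so b + m/b = 2a - c is a
   rational root of f_p.  This is impossible: a rational root of the monic
   integer polynomial f_p is an integer dividing f_p(0) = 1, and
   f_p(1), f_p(-1) are nonzero by a congruence modulo p m^2. *)

Lemma nat_ind2 (P : nat -> Prop) :
  P 0%N -> P 1%N -> (forall n, P n -> P n.+1 -> P n.+2) -> forall n, P n.
Proof.
move=> P0 P1 PSS n; suff: P n /\ P n.+1 by case.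
by elim: n => [|n [Pn Pn1]]; split=> //; apply: PSS.
Qed.

(* c(n, k) = C(n-k, k) + C(n-k-1, k-1), which equals n/(n-k) C(n-k, k): the
   coefficient of (-mu)^k X^(n-2k) in D_n. *)
Definition dickson_coef (n k : nat) : nat :=
  ('C(n - k, k) + (0 < k)%N * 'C(n - k - 1, k.-1))%N.

Section Dickson.
Variables (R : comNzRingType) (mu : R).

Fixpoint dickson_pair n : {poly R} * {poly R} :=
  if n is n'.+1 then
    let: (a, b) := dickson_pair n' in (b, 'X * b - mu%:P * a)
  else (2%:P, 'X).

Definition dickson n : {poly R} := (dickson_pair n).1.

Lemma dickson0 : dickson 0 = 2%:P. Proof. by []. Qed.
Lemma dickson1 : dickson 1 = 'X. Proof. by []. Qed.
Lemma dicksonSS n : dickson n.+2 = 'X * dickson n.+1 - mu%:P * dickson n.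
Proof. by rewrite /dickson /=; case: (dickson_pair n). Qed.

Definition dickson2_term n k : {poly R} :=
  ('C(n - k, k)%:R * (- mu) ^+ k)%:P * 'X^(n - 2 * k).

(* The Dickson polynomials of the second kind E_n(X, mu), given by their
   explicit expansion; they satisfy the recurrence of D_n with E_0 = 1. *)
Definition dickson2 n : {poly R} := \sum_(0 <= k < n.+1) dickson2_term n k.

Lemma dickson2_term_small n k : (n < 2 * k)%N -> dickson2_term n k = 0.
Proof. by move=> ltn2k; rewrite /dickson2_term bin_small ?mul0r ?polyC0 ?mul0r //; lia. Qed.

Lemma dickson2_range n N : (n < 2 * N)%N -> dickson2 n = \sum_(0 <= k < N) dickson2_term n k.
Proof.
move=> ltnN; rewrite /dickson2.
have vanish a b : (n < 2 * a)%N -> \sum_(a <= k < b) dickson2_term n k = 0.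
  move=> lt; rewrite big_nat big1 // => k /andP[ak _]; apply: dickson2_term_small; lia.
case: (leqP N n.+1) => hN.
  by rewrite (@big_cat_nat _ _ _ N 0 n.+1 _ _ (leq0n N) hN) /= (vanish N) ?addr0.
by rewrite [RHS](@big_cat_nat _ _ _ n.+1 0 N _ _ (leq0n _) (ltnW hN)) /= (vanish n.+1) ?addr0 //; lia.
Qed.

Lemma dickson2_0 : dickson2 0 = 1.
Proof. by rewrite /dickson2 big_nat1 /dickson2_term bin0 mul1r expr0 polyC1 mul1r. Qed.

Lemma dickson2_1 : dickson2 1 = 'X.
Proof.
rewrite /dickson2 big_nat_recr //= big_nat1 (@dickson2_term_small 1 1) // addr0.
by rewrite /dickson2_term bin0 expr0 mul1r polyC1 mul1r.
Qed.

Lemma X_dickson2_term n k :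
  'X * dickson2_term n.+1 k = ('C(n.+1 - k, k)%:R * (- mu) ^+ k)%:P * 'X^(n.+2 - 2 * k).
Proof.
case: (leqP (2 * k) n.+1) => hk.
  by rewrite /dickson2_term mulrCA -exprS; congr (_ * 'X^_); lia.
by rewrite dickson2_term_small ?mulr0 // bin_small ?mul0r ?polyC0 ?mul0r //; lia.
Qed.

Lemma dickson2SS n : dickson2 n.+2 = 'X * dickson2 n.+1 - mu%:P * dickson2 n.
Proof.
rewrite (@dickson2_range n.+1 n.+3) 1?(@dickson2_range n n.+2); try lia.
rewrite /dickson2 big_nat_recl // [in RHS]big_nat_recl // mulrDr.
rewrite !mulr_sumr -addrA -sumrB; congr (_ + _).
  by rewrite X_dickson2_term /dickson2_term; congr (_ * 'X^_); lia.
apply: eq_bigr => k _; rewrite X_dickson2_term /dickson2_term !mulrA -polyCM.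
have -> : (n.+2 - 2 * k.+1 = n - 2 * k)%N by lia.
rewrite -mulrBl -polyCB; congr (_%:P * _).
case: (leqP k n) => hk; last by rewrite !bin_small ?(mul0r, mulr0, subr0) //; lia.
have -> : (n.+2 - k.+1 = (n - k).+1)%N by lia.
have -> : (n.+1 - k.+1 = n - k)%N by lia.
rewrite binS natrD exprS; ring.
Qed.

Lemma dickson_dickson2 n : dickson n.+2 = dickson2 n.+2 - mu%:P * dickson2 n.
Proof.
have two : (2%:P : {poly R}) = 1 + 1 by rewrite -polyC1 -polyCD.
elim/nat_ind2: n => [||n IH1 IH2].
- by rewrite !dicksonSS dickson1 dickson0 !dickson2SS dickson2_1 dickson2_0 two; ring.
- by rewrite !dicksonSS dickson1 dickson0 !dickson2SS dickson2_1 dickson2_0 two; ring.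
- by rewrite dicksonSS IH1 IH2 (dickson2SS n.+2) (dickson2SS n); ring.
Qed.

Lemma monic_X_mul_sub (A B : {poly R}) (c : R) :
  A \is monic -> (size B < size A)%N ->
  'X * A - c%:P * B \is monic /\ size ('X * A - c%:P * B) = (size A).+1.
Proof.
move=> monA ltBA; have A0 : A != 0 := monic_neq0 monA.
have sizeXA : size ('X * A) = (size A).+1.
  by rewrite mulrC size_Mmonic ?monicX // size_polyX addn2.
have ltcB : (size (- (c%:P * B))%R < size ('X * A)%R)%N.
  rewrite size_polyN sizeXA ltnS (leq_trans (size_polyMleq _ _)) //.
  by have := size_polyC_leq1 c; move: (size c%:P) (size B) (size A) ltBA => *; lia.
rewrite monicE lead_coefDl // -monicE monicMl ?monicX //.
by rewrite size_polyDl.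
Qed.

Lemma dickson_monic_size n : dickson n.+1 \is monic /\ size (dickson n.+1) = n.+2.
Proof.
suff: [/\ dickson n.+1 \is monic, size (dickson n.+1) = n.+2 & (size (dickson n) <= n.+1)%N].
  by case.
elim: n => [|n [monD sizeD sizeD']].
  by rewrite dickson1 dickson0 monicX size_polyX size_polyC_leq1.
have [] := @monic_X_mul_sub (dickson n.+1) (dickson n) mu monD; first by rewrite sizeD.
by rewrite -dicksonSS sizeD => -> ->.
Qed.

Lemma dickson_odd_root0 n : odd n -> (dickson n).[0] = 0.
Proof.
elim/nat_ind2: n => [||n IH _] //=; first by rewrite dickson1 hornerX.
by rewrite negbK dicksonSS => /IH; rewrite !hornerE => ->; rewrite mulr0 oppr0.
Qed.

Lemma dickson_hornerN n (x : R) : (dickson n).[- x] = (-1) ^+ n * (dickson n).[x].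
Proof.
elim/nat_ind2: n => [||n IH1 IH2].
- by rewrite dickson0 !hornerC expr0 mul1r.
- by rewrite dickson1 !hornerX expr1 mulN1r.
- by rewrite dicksonSS !hornerE IH1 IH2 !exprS; ring.
Qed.

Lemma dickson_odd_expansion h :
  dickson (2 * h).+3 = \sum_(0 <= k < h.+2)
    ((dickson_coef (2 * h).+3 k)%:R * (- mu) ^+ k)%:P * 'X^((2 * h).+3 - 2 * k).
Proof.
rewrite dickson_dickson2 (@dickson2_range _ h.+2) 1?(@dickson2_range _ h.+1); try lia.
rewrite big_nat_recl // [RHS]big_nat_recl // mulr_sumr -addrA -sumrB; congr (_ + _).
apply: eq_bigr => k _; rewrite /dickson2_term /dickson_coef !mulrA -polyCM.
have -> : ((2 * h).+1 - 2 * k = (2 * h).+3 - 2 * k.+1)%N by lia.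
rewrite -mulrBl -polyCB; congr (_%:P * _).
have -> : ((2 * h).+1 - k = (2 * h).+3 - k.+1 - 1)%N by lia.
rewrite /= mul1n natrD exprS; ring.
Qed.

End Dickson.

Lemma dickson_map (R S : comNzRingType) (f : {rmorphism R -> S}) (mu : R) n :
  map_poly f (dickson mu n) = dickson (f mu) n.
Proof.
elim/nat_ind2: n => [||n IH1 IH2].
- by rewrite !dickson0 map_polyC /= rmorph_nat.
- by rewrite !dickson1 map_polyX.
- by rewrite !dicksonSS rmorphB !rmorphM /= map_polyX map_polyC IH1 IH2.
Qed.

Lemma dickson_horner_shift (F : fieldType) (mu x : F) n : x != 0 ->
  (dickson mu n).[x + mu / x] = x ^+ n + (mu / x) ^+ n.
Proof.
move=> x0; have xy : x * (mu / x) = mu by rewrite mulrCA divff ?mulr1.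
move: (mu / x) xy => y xy.
elim/nat_ind2: n => [||n IH1 IH2].
- by rewrite dickson0 hornerC !expr0.
- by rewrite dickson1 hornerX !expr1.
- by rewrite dicksonSS !hornerE IH1 IH2 -xy !exprS; ring.
Qed.

Lemma dickson_coef0 n : dickson_coef n 0 = 1%N.
Proof. by rewrite /dickson_coef subn0 bin0. Qed.

Lemma dickson_coef1 n : (1 < n)%N -> dickson_coef n 1 = n.
Proof. by move=> n_gt1; rewrite /dickson_coef /= bin1 bin0 mul1n; lia. Qed.

Lemma binomial_shift n k : (0 < k < n)%N ->
  ((n - k) * 'C(n - k - 1, k.-1) = k * 'C(n - k, k))%N.
Proof. by case: k => // k _; have := mul_bin_diag (n - k.+1) k; rewrite -subn1. Qed.

Lemma dickson_coefE n k : (k < n)%N -> ((n - k) * dickson_coef n k = n * 'C(n - k, k))%N.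
Proof.
case: k => [|k] ltkn; first by rewrite dickson_coef0 subn0 bin0.
have := @binomial_shift n k.+1 ltkn; rewrite /dickson_coef /= mul1n.
move: ('C(_, _)) ('C(_, _)) => c1 c2; nia.
Qed.

Lemma prime_dvd_dickson_coef p k : prime p -> (0 < k < p)%N -> (p %| dickson_coef p k)%N.
Proof.
move=> prime_p /andP[k_gt0 ltkp].
have kc : (k * dickson_coef p k = p * 'C(p - k - 1, k.-1))%N.
  have := @binomial_shift p k; rewrite k_gt0 ltkp /dickson_coef k_gt0 mul1n => /(_ isT).
  move: ('C(_, _)) ('C(_, _)) => c1 c2; nia.
have : (p %| k * dickson_coef p k)%N by rewrite kc dvdn_mulr.
by rewrite Euclid_dvdM // (gtnNdvd k_gt0 ltkp).
Qed.

Lemma f_poly_dickson h m : f_poly (2 * h).+3 m = 1 + dickson (m%:R : rat) (2 * h).+3.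
Proof.
rewrite dickson_odd_expansion /f_poly; congr (1 + _).
have -> : ((2 * h).+3.-1)./2 = h.+1.
  have -> : ((2 * h).+3.-1 = (h.+1).*2)%N by rewrite -mul2n; lia.
  by rewrite doubleK.
apply: eq_big_nat => k /andP[_ ltkh]; congr (_%:P * _).
have nz : ((2 * h).+3 - k)%:R != 0 :> rat by rewrite pnatr_eq0; lia.
have coefE : (((2 * h).+3)%:R / ((2 * h).+3 - k)%:R * 'C((2 * h).+3 - k, k)%:R : rat) =
          (dickson_coef (2 * h).+3 k)%:R.
  by apply: (mulfI nz); rewrite mulrA mulrCA divff // mulr1 -!natrM dickson_coefE //; lia.
by rewrite -coefE [in RHS]exprNn; ring.
Qed.

Lemma one_add_dickson_monic_size (R : comNzRingType) (mu : R) n :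
  1 + dickson mu n.+1 \is monic /\ size (1 + dickson mu n.+1) = n.+2.
Proof.
have [monD sizeD] := dickson_monic_size mu n.
have lt1D : (size (1 : {poly R})%R < size (dickson mu n.+1))%N by rewrite size_poly1 sizeD.
by rewrite addrC monicE lead_coefDl // -monicE size_polyDl.
Qed.

(* Modulo p m^2, D_p(1, mu) = 1 - p mu: the coefficient of (-mu)^k is 1 for
   k = 0, p for k = 1 and divisible by p for 1 < k < p. *)
Lemma dickson_horner1 h (mu : int) : prime (2 * h).+3 -> exists U : int,
  (dickson mu (2 * h).+3).[1] = 1 - ((2 * h).+3)%:R * mu + ((2 * h).+3)%:R * mu ^+ 2 * U.
Proof.
set p := (2 * h).+3 => prime_p.
exists (\sum_(0 <= k < h) ((dickson_coef p k.+2 %/ p)%:R * (- mu) ^+ k)).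
rewrite dickson_odd_expansion horner_sum !big_nat_recl //.
rewrite !hornerCM !hornerXn !expr1n !mulr1 dickson_coef0 (@dickson_coef1 p) //.
rewrite mulr_sumr addrA; congr (_ + _); first by rewrite expr1 mulrN.
apply: eq_big_nat => k /andP[_ ltkh]; rewrite hornerCM hornerXn expr1n mulr1.
have p_dvd : (p %| dickson_coef p k.+2)%N by apply: prime_dvd_dickson_coef => //; lia.
by rewrite -{1}(divnK p_dvd) natrM !exprS; ring.
Qed.

Lemma int_mul_neq (a k c : int) : 0 < c < a -> a * k != c.
Proof. by case/andP=> c_gt0 ltca; apply/eqP=> akc; case: (lerP k 0) => k0; nia. Qed.

(* 1 + D_p(X, m) has no integer root: such a root is a unit by
   D_p(0) = 0, and +-1 are excluded by the congruence above. *)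
Lemma no_int_root h (m : nat) (z : int) : prime (2 * h).+3 -> (2 <= m)%N ->
  (1 + dickson (m%:R : int) (2 * h).+3).[z] != 0.
Proof.
set p := (2 * h).+3 => prime_p m_ge2; set D := dickson _ p.
have odd_p : odd p by rewrite /= oddM.
have /factor_theorem [Q] : root D 0 by rewrite /root dickson_odd_root0.
rewrite polyC0 subr0 => DQ.
have [U DU] := dickson_horner1 (m%:R : int) prime_p.
have D_N1 : D.[-1] = - D.[1] by rewrite dickson_hornerN -signr_odd odd_p mulN1r.
have pm_gt2 : 2 < p%:R * m%:R :> int by rewrite -natrM ltr_nat; nia.
apply/eqP; rewrite hornerD hornerC => root_z.
have : (- Q.[z]) * z = 1.
  by move/eqP: root_z; rewrite DQ hornerMX mulNr addrC addr_eq0 => /eqP ->; rewrite opprK.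
move/intUnitRing.unitzPl; rewrite qualifE /= => /orP[] /eqP z_eq; move: root_z.
  rewrite z_eq DU => /eqP; apply/negP; rewrite -subr_eq0.
  have -> : 1 + (1 - p%:R * m%:R + p%:R * m%:R ^+ 2 * U) - 0 =
            2 - p%:R * m%:R * (1 - m%:R * U) :> int by ring.
  by rewrite subr_eq0 eq_sym int_mul_neq // pm_gt2.
rewrite z_eq D_N1 DU => /eqP; apply/negP.
have -> : 1 + - (1 - p%:R * m%:R + p%:R * m%:R ^+ 2 * U) =
          p%:R * m%:R * (1 - m%:R * U) :> int by ring.
rewrite mulf_eq0 negb_or (gt_eqF (lt_trans _ pm_gt2)) //= subr_eq0 eq_sym.
by rewrite int_mul_neq // ltr01 ltr1n.
Qed.

(* By integrality, a rational root of the monic integer polynomial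
   1 + D_p(X, m) would be an integer root. *)
Lemma no_rat_root h m (w : rat) : prime (2 * h).+3 -> (2 <= m)%N ->
  ~~ root (1 + dickson (m%:R : algC) (2 * h).+3) (ratr w).
Proof.
move=> prime_p m_ge2; apply/negP => root_w.
have overZ : map_poly intr (1 + dickson (m%:R : int) (2 * h).+3) =
             1 + dickson (m%:R : algC) (2 * h).+3.
  by rewrite rmorphD rmorph1 /= dickson_map rmorph_nat.
have w_Aint : ratr w \in Aint.
  apply: (root_monic_Aint root_w); first by case: (one_add_dickson_monic_size (m%:R : algC) (2 * h).+2).
  by rewrite -overZ; apply/polyOverP => i; rewrite coef_map /= intr_int.
have /intrP [z wz] := Cint_rat_Aint (Crat_rat w) w_Aint.
by move: root_w; rewrite wz -overZ /root horner_map intr_eq0 (negbTE (no_int_root z prime_p m_ge2)).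
Qed.

Section JoukowskiLift.
Variables (F : fieldType) (mu : F).

(* The lift A |-> X^(deg A) A(X + mu/X) of a polynomial along the
   Joukowski map x |-> x + mu/x. *)
Definition jlift (A : {poly F}) : {poly F} :=
  \sum_(i < size A) A`_i *: (('X ^+ 2 + mu%:P) ^+ i * 'X ^+ ((size A).-1 - i)).

Lemma jlift_horner A x : x != 0 -> (jlift A).[x] = x ^+ (size A).-1 * A.[x + mu / x].
Proof.
move=> x0; rewrite /jlift horner_sum [A.[_]]horner_coef mulr_sumr.
apply: eq_bigr => i _; rewrite hornerZ hornerM hornerXn horner_exp hornerD hornerXn hornerC.
have le_i : (i <= (size A).-1)%N by case: i => i /=; lia.
have -> : x ^+ 2 + mu = x * (x + mu / x) by rewrite mulrDr -expr2 mulrCA divff // mulr1.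
rewrite -[in RHS](subnKC le_i) exprD; move: (x + mu / x) => y.
change (A`_i * ((x * y) ^+ i * x ^+ ((size A).-1 - i)) =
        x ^+ i * x ^+ ((size A).-1 - i) * (A`_i * y ^+ i)).
by rewrite exprMn; ring.
Qed.

Lemma jlift_horner0 A : A != 0 -> (jlift A).[0] = lead_coef A * mu ^+ (size A).-1.
Proof.
move=> A0; rewrite /jlift horner_sum lead_coefE.
have sizeA : size A = (size A).-1.+1 by rewrite prednK // lt0n size_poly_eq0.
set d := (size A).-1 in sizeA *.
rewrite sizeA big_ord_recr /= subnn expr0 mulr1 big1 ?add0r; last first.
  move=> i _; rewrite hornerZ hornerM hornerXn expr0n.
  have -> : (d - i == 0)%N = false by case: i => i /=; lia.
  by rewrite !mulr0.
by rewrite hornerZ horner_exp hornerD hornerXn hornerC expr0n add0r.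
Qed.

Lemma size_jlift A : (size (jlift A) <= (2 * (size A).-1).+1)%N.
Proof.
rewrite /jlift; apply: (leq_trans (size_sum _ _ _)).
apply/bigmax_leqP => i _; apply: (leq_trans (size_scale_leq _ _)).
apply: (leq_trans (size_polyMleq _ _)); rewrite size_polyXn addnS /=.
have size_quad : (size ('X ^+ 2 + mu%:P)%R <= 3)%N.
  by rewrite (leq_trans (size_polyD _ _)) // geq_max size_polyXn (leq_trans (size_polyC_leq1 _)).
have size_pow : (size (('X ^+ 2 + mu%:P) ^+ i)%R <= (2 * i).+1)%N.
  apply: (leq_trans (size_poly_exp_leq _ _)).
  by move: (size ('X ^+ 2 + mu%:P)%R) (nat_of_ord i) size_quad => [|k] j le_k //=; nia.
have := ltn_ord i; move: (nat_of_ord i) size_pow => j.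
by move: (size (('X ^+ 2 + mu%:P) ^+ j)%R) => s; clear i; case: (size A) => [|n] /=; lia.
Qed.

End JoukowskiLift.

Lemma jlift_map (F K : fieldType) (f : {rmorphism F -> K}) (mu : F) A :
  map_poly f (jlift mu A) = jlift (f mu) (map_poly f A).
Proof.
rewrite /jlift size_map_poly rmorph_sum; apply: eq_bigr => i _.
rewrite /= map_polyZ coef_map rmorphM !rmorphXn rmorphD /= map_polyXn map_polyC.
by rewrite map_polyX.
Qed.

Lemma one_add_dickson_shift (F : fieldType) (mu s t x : F) n :
  s + t = -1 -> s * t = mu ^+ n -> x != 0 ->
  x ^+ n * (1 + dickson mu n).[x + mu / x] = (x ^+ n - s) * (x ^+ n - t).
Proof.
move=> st_sum st_prod x0; have xn0 : x ^+ n != 0 by rewrite expf_neq0.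
rewrite hornerD hornerC dickson_horner_shift // expr_div_n.
have -> : (x ^+ n - s) * (x ^+ n - t) = x ^+ n * x ^+ n - (s + t) * x ^+ n + s * t by ring.
by rewrite st_sum st_prod; field.
Qed.

Lemma nonreal_quadratic_root (M : nat) : (1 <= M)%N ->
  exists s : algC, [/\ s + s^* = -1, s * s^* = M%:R & s != s^*].
Proof.
move=> M_ge1; pose r : algC := sqrtC ((4 * M).-1)%:R.
have r_real : r^* = r by apply/conj_Creal/ger0_real; rewrite sqrtC_ge0.
have rr : r * r = 4 * M%:R - 1.
  by rewrite -expr2 sqrtCK -subn1 natrB ?natrM //; lia.
have ii : 'i * 'i = -1 :> algC by rewrite -expr2 sqrCi.
have s_conj : ((-1 + 'i * r) / 2)^* = (-1 - 'i * r) / 2.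
  by rewrite rmorphM /= fmorphV /= rmorph_nat rmorphD rmorphN rmorph1 rmorphM /= conjCi r_real mulNr.
exists ((-1 + 'i * r) / 2); rewrite s_conj; split.
- by field.
- have -> : (-1 + 'i * r) / 2 * ((-1 - 'i * r) / 2) = (1 - ('i * 'i) * (r * r)) / 4 by field.
  by rewrite ii rr; field.
- apply/eqP => /(congr1 (fun y => y - (-1 - 'i * r) / 2)); rewrite subrr.
  have -> : (-1 + 'i * r) / 2 - (-1 - 'i * r) / 2 = 'i * r by field.
  move/eqP; rewrite mulf_eq0 (negbTE (neq0Ci _)) /= => /eqP r0.
  move: rr; rewrite r0 mulr0 => /eqP; rewrite eq_sym subr_eq0 -natrM -[1]/(1%:R) eqr_nat.
  by lia.
Qed.

Lemma conj_horner_rat (P : {poly rat}) (x : algC) :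
  ((map_poly ratr P).[x])^* = (map_poly ratr P).[x^*].
Proof.
rewrite -horner_map /= -map_poly_comp; congr (_.[_]).
by apply: eq_map_poly => a /=; exact: (fmorph_rat Num.conj).
Qed.

(* Reduction modulo a rational monic quadratic X^2 + c X + d: at each of its
   roots, P takes the value a + b x for fixed rationals a, b. *)
Lemma horner_quadratic (P : {poly rat}) (c d : rat) : exists a b : rat,
  forall x : algC, x ^+ 2 + ratr c * x + ratr d = 0 ->
  (map_poly ratr P).[x] = ratr a + ratr b * x.
Proof.
pose Q : {poly rat} := 'X^2 + c *: 'X + d%:P.
have sizeQ : size Q = 3%N.
  rewrite /Q -addrA size_polyDl size_polyXn //.
  apply: (leq_ltn_trans (size_polyD _ _)); rewrite gtn_max.
  by rewrite (leq_ltn_trans (size_scale_leq _ _)) ?size_polyX // (leq_ltn_trans (size_polyC_leq1 _)).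
have Qx (x : algC) : x ^+ 2 + ratr c * x + ratr d = 0 -> (map_poly ratr Q).[x] = 0.
  by move=> <-; rewrite /Q !rmorphD /= map_polyZ map_polyXn map_polyX map_polyC !hornerE.
have sizeR : (size (P %% Q)%R <= 2)%N.
  by rewrite -ltnS -sizeQ ltn_modp -size_poly_eq0 sizeQ.
exists (P %% Q)`_0, (P %% Q)`_1 => x /Qx root_x.
rewrite {1}(divp_eq P Q) rmorphD rmorphM /= hornerD hornerM root_x mulr0 add0r.
rewrite (@horner_coef_wide _ 2) ?size_map_poly //.
by rewrite !big_ord_recr big_ord0 /= !coef_map /= expr0 expr1 add0r mulr1.
Qed.

(* s has no p-th root in Q(s): a root b = a + c s would satisfy b conj b = m,
   so b + m/b = 2a - c would be a rational root of 1 + D_p(X, m). *)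
Lemma no_pth_root_in_Qs h m (s : algC) (P : {poly rat}) :
  prime (2 * h).+3 -> (2 <= m)%N -> s + s^* = -1 -> s * s^* = (m ^ (2 * h).+3)%:R ->
  (map_poly ratr P).[s] ^+ (2 * h).+3 != s.
Proof.
set p := (2 * h).+3 => prime_p m_ge2 s_sum s_prod; apply/negP => /eqP b_pow.
set b := (map_poly ratr P).[s] in b_pow.
pose mC : algC := m%:R.
have s_conj : s^* = -1 - s by rewrite -s_sum addrC addKr.
have M0 : (m ^ p)%:R != 0 :> algC by rewrite pnatr_eq0 -lt0n expn_gt0 (leq_trans _ m_ge2).
have root_quad x : x = s \/ x = s^* -> x ^+ 2 + ratr 1 * x + ratr (m ^ p)%:R = 0.
  by rewrite rmorph1 mul1r rmorph_nat -s_prod s_conj => -[] ->; ring.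
have [a [c P_ac]] := horner_quadratic P 1 (m ^ p)%:R.
have b_ac : b = ratr a + ratr c * s by rewrite /b P_ac ?root_quad //; left.
have b_conj : b^* = ratr a + ratr c * s^* by rewrite /b conj_horner_rat P_ac ?root_quad //; right.
have b_conj_pow : b^* ^+ p = s^* by rewrite -rmorphXn b_pow.
have s0 : s != 0 by apply: contra_neq M0 => s0; rewrite -s_prod s0 mul0r.
have b0 : b != 0 by apply: contraNneq s0 => b0; rewrite -b_pow b0 expr0n.
have b_norm : b * b^* = mC.
  apply/eqP; rewrite -(@eqrXn2 _ p) ?mul_conjC_ge0 ?ler0n //.
  by rewrite exprMn b_pow b_conj_pow s_prod natrX.
have mC_b : mC / b = b^* by rewrite -b_norm mulrC mulKf.
have w_rat : b + mC / b = ratr (2 * a - c).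
  by rewrite mC_b b_conj {1}b_ac rmorphB rmorphM rmorph_nat /= s_conj; ring.
have : root (1 + dickson mC p) (ratr (2 * a - c)).
  have s_prod' : s * s^* = mC ^+ p by rewrite s_prod natrX.
  have := one_add_dickson_shift s_sum s_prod' b0; rewrite -w_rat b_pow subrr mul0r.
  by move/eqP; rewrite mulf_eq0 (negbTE s0).
by apply/negP; apply: no_rat_root.
Qed.

(* If g divides X^n - s (n odd prime, s != 0) with 0 < deg g < n, then s has an
   n-th root which is a rational expression in s and c = g(0)/lead(g): the
   product of the d = deg g roots of g is (-1)^d c, its n-th power is (-s)^d,
   and d is invertible modulo n. *)
Lemma pth_root_of_factor (F : closedFieldType) n (s : F) (g : {poly F}) :
  prime n -> odd n -> s != 0 -> g %| 'X^n - s%:P -> (1 < size g < n.+1)%N ->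
  exists u v : nat, (- ((g.[0] / lead_coef g) ^+ u / (- s) ^+ v)) ^+ n = s.
Proof.
move=> prime_n odd_n s0 g_dvd /andP[size_gt1 size_lt].
have oppX x : (- x) ^+ n = - x ^+ n by rewrite exprNn -signr_odd odd_n expr1 mulN1r.
have [rs Drs] := closed_field_poly_normal g.
have g0 : g != 0 by rewrite -size_poly_eq0; lia.
have lc0 : lead_coef g != 0 by rewrite lead_coef_eq0.
have size_rs : size g = (size rs).+1 by rewrite {1}Drs size_scale // size_prod_XsubC.
have rs_roots z : z \in rs -> z ^+ n = s.
  move=> z_rs; have : root g z by rewrite Drs rootZ // root_prod_XsubC.
  move/(root_dvdp g_dvd); rewrite /root !hornerE subr_eq0.
  by move/eqP.
set c := g.[0] / lead_coef g.
have c_prod : c = \prod_(z <- rs) (- z).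
  rewrite /c {1}Drs hornerZ horner_prod mulrC mulKf //.
  by apply: eq_bigr => z _; rewrite hornerXsubC sub0r.
have c_pow : c ^+ n = (- s) ^+ size rs.
  rewrite c_prod -prodrXl (eq_big_seq (fun=> - s)) ?big_const_seq ?count_predT.
    by elim: (size rs) => [|k IH] //=; rewrite exprS IH.
  by move=> z z_rs; rewrite oppX rs_roots.
have coprime_d : coprime (size rs) n.
  by rewrite coprime_sym prime_coprime // gtnNdvd //; lia.
have [[u v] /= uv] : exists uv : nat * nat, (uv.1 * size rs - uv.2 * n)%N = 1%N.
  by apply/coprimeP => //; lia.
exists u, v; have {}uv : (u * size rs = v * n + 1)%N by lia.
have ns0 : - s != 0 by rewrite oppr_eq0.
rewrite oppX expr_div_n -!exprM mulnC exprM c_pow -exprM mulnC uv exprD expr1.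
by rewrite mulrAC divff ?mul1r ?opprK // expf_neq0.
Qed.

Lemma num_field1_horner (Qs : fieldExtType rat) (QsC : {rmorphism Qs -> algC})
    (s' : Qs) (x : Qs) :
  <<1 & [:: s']>>%VS = fullv -> exists P : {poly rat}, QsC x = (map_poly ratr P).[QsC s'].
Proof.
move=> gen; have : x \in <<1; s'>>%VS by rewrite -adjoin_seq1 gen memvf.
move=> /Fadjoin_poly_eq x_eq; have /polyOver1P [P DP] := Fadjoin_polyOver 1%VS s' x.
exists P; rewrite -x_eq DP -horner_map /=; congr (_.[_]).
by apply/polyP => i; rewrite !coef_map /= alg_num_field fmorph_rat.
Qed.

Section ProperFactor.
(* By the identity one_add_dickson_shift, G divides
   (X^p - s)(X^p - conj s), so gcd(G, X^p - s) is a factor of X^p - s. *)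
Variables (h m : nat) (s : algC) (q : {poly rat}).
Local Notation p := (2 * h).+3.
Local Notation mC := (m%:R : algC).
Hypotheses (prime_p : prime p) (m_ge2 : (2 <= m)%N).
Hypotheses (s_sum : s + s^* = -1) (s_prod : s * s^* = (m ^ p)%:R) (s_nonreal : s != s^*).
Hypotheses (q_dvd : q %| f_poly p m) (size_q_gt1 : (1 < size q)%N).

Let qC : {poly algC} := map_poly ratr q.
Let G := jlift mC qC.

Lemma mC_neq0 : mC != 0. Proof. by rewrite pnatr_eq0; lia. Qed.

Lemma s_prod_pow : s * s^* = mC ^+ p. Proof. by rewrite s_prod natrX. Qed.

Lemma G_conj : map_poly Num.conj G = G.
Proof.
rewrite /G jlift_map rmorph_nat -map_poly_comp; congr (jlift _ _).
by apply: eq_map_poly => a /=; exact: (fmorph_rat Num.conj).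
Qed.

Lemma G_neq0 : G != 0.
Proof.
have qC0 : qC != 0.
  by rewrite -size_poly_eq0 /qC size_map_poly -lt0n (ltn_trans _ size_q_gt1).
apply/eqP => G0; have := jlift_horner0 mC qC0; rewrite -/G G0 horner0 => /esym/eqP.
by rewrite mulf_eq0 lead_coef_eq0 (negbTE qC0) expf_eq0 (negbTE mC_neq0) andbF.
Qed.

(* Some root of G is a p-th root of s: lift a root z of q along the
   Joukowski map; since q divides f_p, t^p is s or conj s, and in the
   latter case conj t works since G is real. *)
Lemma G_root_pth_root_s : exists t, G.[t] = 0 /\ t ^+ p = s.
Proof.
have [z root_z] : exists z, root qC z.
  by apply/closed_rootP; rewrite size_map_poly neq_ltn size_q_gt1 orbT.
pose t := (z + sqrtC (z ^+ 2 - 4 * mC)) / 2.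
have t_quad : t * t - z * t + mC = 0.
  rewrite /t; have := sqrtCK (z ^+ 2 - 4 * mC); move: (sqrtC _) => r r2.
  have -> : (z + r) / 2 * ((z + r) / 2) - z * ((z + r) / 2) + mC =
            (r ^+ 2 - (z ^+ 2 - 4 * mC)) / 4 by field.
  by rewrite r2 subrr mul0r.
have t0 : t != 0.
  by apply: contra_eq_neq t_quad => ->; rewrite !mulr0 subr0 add0r mC_neq0.
have z_t : z = t + mC / t.
  apply: (mulIf t0); rewrite mulrDl divfK //; apply/eqP.
  by rewrite -subr_eq0 -oppr_eq0 -t_quad; apply/eqP; ring.
have G_t : G.[t] = 0 by rewrite jlift_horner // -z_t (eqP root_z) mulr0.
have : t ^+ p * (1 + dickson mC p).[t + mC / t] = 0.
  have qC_dvd : qC %| 1 + dickson mC p.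
    by have := q_dvd; rewrite -(dvdp_map (ratr : rat -> algC)) f_poly_dickson rmorphD rmorph1 /= dickson_map rmorph_nat.
  by rewrite -z_t (eqP (root_dvdp qC_dvd root_z)) mulr0.
rewrite (one_add_dickson_shift s_sum s_prod_pow t0) => /eqP.
rewrite mulf_eq0 !subr_eq0 => /orP[/eqP ts|/eqP ts]; first by exists t.
exists t^*; split; first by rewrite -G_conj horner_map /= G_t rmorph0.
by rewrite -rmorphXn ts; exact: conjCK.
Qed.

(* X^p - s cannot divide G: otherwise so would its conjugate, which is
   coprime to it, and deg G <= 2 deg q < 2p. *)
Lemma Xn_sub_s_ndvd_G : (size q <= p)%N -> ~~ ('X^p - s%:P %| G).
Proof.
move=> size_q; apply/negP => dvd_s.
have dvd_conj : 'X^p - (s^*)%:P %| G.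
  by rewrite -G_conj; move: dvd_s; rewrite -(dvdp_map Num.conj) rmorphB /= map_polyXn map_polyC.
have coprime_s : coprimep ('X^p - s%:P) ('X^p - (s^*)%:P).
  have ds0 : s^* - s != 0 by rewrite subr_eq0 eq_sym.
  apply/Bezout_coprimepP; exists ((s^* - s)^-1%:P, - (s^* - s)^-1%:P) => /=.
  have -> : (s^* - s)^-1%:P * ('X^p - s%:P) + - (s^* - s)^-1%:P * ('X^p - (s^*)%:P) =
            ((s^* - s)^-1 * (s^* - s))%:P by rewrite polyCM polyCB; ring.
  by rewrite mulVf // polyC1 eqpxx.
have dvd_prod : ('X^p - s%:P) * ('X^p - (s^*)%:P) %| G by rewrite Gauss_dvdp // dvd_s.
have := dvdp_leq G_neq0 dvd_prod; rewrite size_mul -?size_poly_eq0 ?size_XnsubC // => le_G.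
have := leq_trans le_G (size_jlift mC qC); rewrite size_map_poly.
by move: size_q; case: (size q) => [|n] /=; lia.
Qed.

(* g = gcd(G, X^p - s) is computed in the number field Q(s); it has a root
   (the p-th root of s above), is not X^p - s itself, so by
   pth_root_of_factor s would have a p-th root in Q(s). *)
Lemma proper_factor_size : (p < size q)%N.
Proof.
rewrite ltnNge; apply/negP => size_q.
have [Qs [QsC [[|s' []] //= [Ds'] gen]]] := num_field_exists [:: s].
pose gQ := gcdp (jlift (m%:R : Qs) (map_poly (in_alg Qs) q)) ('X^p - s'%:P).
have DgQ : map_poly QsC gQ = gcdp G ('X^p - s%:P).
  rewrite gcdp_map jlift_map rmorph_nat rmorphB /= map_polyXn map_polyC /= Ds'.
  congr (gcdp (jlift _ _) _); apply/polyP => i.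
  by rewrite !coef_map /= alg_num_field fmorph_rat.
set g := gcdp G _ in DgQ.
have size_Xs : size ('X^p - s%:P) = p.+1 := size_XnsubC s (ltn0Sn _).
have Xs0 : 'X^p - s%:P != 0 by rewrite -size_poly_eq0 size_Xs.
have g_dvd : g %| 'X^p - s%:P by apply: dvdp_gcdr.
have g0 : g != 0 by apply: contraNneq Xs0 => g0; rewrite -dvd0p -g0.
have size_g_gt1 : (1 < size g)%N.
  have [t [G_t t_pow]] := G_root_pth_root_s.
  apply: (@root_size_gt1 _ t _ g0); rewrite root_gcd /root G_t eqxx /=.
  by rewrite !hornerE t_pow subrr.
have size_g_le : (size g <= p.+1)%N by rewrite -size_Xs dvdp_leq.
have size_g_lt : (size g < p.+1)%N.
  rewrite ltn_neqAle size_g_le andbT; apply: contraNneq (Xn_sub_s_ndvd_G size_q) => eq_size.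
  have /eqp_dvdl <- : g %= 'X^p - s%:P by rewrite -dvdp_size_eqp // size_Xs eq_size.
  exact: dvdp_gcdl.
have s0 : s != 0 by apply: contra_neq s_nonreal => ->; rewrite rmorph0.
have size_g : (1 < size g < p.+1)%N by rewrite size_g_gt1.
have odd_p : odd p by rewrite /= oddM.
have [u [v root_s]] := pth_root_of_factor prime_p odd_p s0 g_dvd size_g.
have [P DP] := num_field1_horner QsC (- ((gQ.[0] / lead_coef gQ) ^+ u / (- s') ^+ v)) gen.
apply/negP: (no_pth_root_in_Qs P prime_p m_ge2 s_sum s_prod); rewrite -Ds' -DP.
rewrite rmorphN fmorph_div !rmorphXn rmorphN Ds' fmorph_div -lead_coef_map DgQ.
by rewrite horner_coef0 -coef_map DgQ -horner_coef0 root_s eqxx.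
Qed.

End ProperFactor.

Lemma odd_prime_form p : prime p -> (2 < p)%N -> exists h, p = (2 * h).+3.
Proof.
move=> prime_p p_gt2; have [p2|odd_p] := even_prime prime_p; first by rewrite p2 in p_gt2.
exists (p./2).-1; have := odd_double_half p; rewrite odd_p -mul2n.
by move: p_gt2; move: (p./2) => k; lia.
Qed.

Theorem mainTheorem15 (p m : nat) :
  prime p -> (5 <= p)%N -> (2 <= m)%N -> irreducible_poly (f_poly p m).
Proof.
move=> prime_p p_ge5 m_ge2; have [h Dp] := odd_prime_form prime_p (leq_trans (isT : 3 <= 5)%N p_ge5).
rewrite Dp in prime_p *.
have [_] := one_add_dickson_monic_size (m%:R : rat) (2 * h).+2; rewrite -f_poly_dickson => size_f.
have f0 : f_poly (2 * h).+3 m != 0 by rewrite -size_poly_eq0 size_f.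
have mp_gt0 : (0 < m ^ (2 * h).+3)%N by rewrite expn_gt0 ltnW.
have [s [s_sum s_prod s_nonreal]] := nonreal_quadratic_root mp_gt0.
split; first by rewrite size_f.
move=> q size_q_neq1 q_dvd.
have q0 : q != 0 by apply: contraNneq f0 => q0; rewrite -dvd0p -q0.
have size_q_gt1 : (1 < size q)%N by move: size_q_neq1; rewrite -size_poly_eq0 in q0; lia.
have := proper_factor_size prime_p m_ge2 s_sum s_prod s_nonreal q_dvd size_q_gt1.
by rewrite -dvdp_size_eqp // eqn_leq dvdp_leq //= size_f.
Qed.
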